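(* Consider the delay differential system \[ \begin{aligned} \dot T(t)&= s-dT(t)+aT(t)\Big(1-\frac{T(t)+I(t)}{T_{\max}}\Big)-\frac{bT(t)V(t)}{1+\alpha V(t)},\\ \dot I(t)&= \frac{bT(t-\tau)V(t-\tau)}{1+\alpha V(t-\tau)}+aI(t)\Big(1-\frac{T(t)+I(t)}{T_{\max}}\Big)-\mu I(t),\\ \dot V(t)&= pI(t)-cV(t), \end{aligned} \] with positive constants $s,d,a,T_{\max},b,\alpha,\mu,p,c$, $\tau\ge0$, and nonnegative continuous initial data on $[-\tau,0]$. Then every solution satisfies \[ \limsup_{t\to\infty}T(t)\le T_0=\frac{T_{\max}}{2a}\Big[a-d+\sqrt{(a-d)^2+\tfrac{4as}{T_{\max}}}\Big], \] and hence for every sufficiently small $\epsilon>0$ there is $t_1>0$ such that $T(t)\le T_0+\epsilon$ for $t>t_1$. *)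

From Stdlib Require Import Reals Lra.
Open Scope R_scope.

Definition continuous_from (a : R) (f : R -> R) : Prop :=
  forall t, a <= t ->
    forall eps, 0 < eps ->
      exists delta, 0 < delta /\
        forall y, a <= y -> Rabs (y - t) < delta -> Rabs (f y - f t) < eps.

Definition infect (b alpha Tv Vv : R) : R := b * Tv * Vv / (1 + alpha * Vv).

Definition is_solution (s d a Tmax b alpha mu p c tau : R)
  (T I V : R -> R) : Prop :=
  (forall t, -tau <= t <= 0 -> 0 <= T t /\ 0 <= I t /\ 0 <= V t) /\
  continuous_from (-tau) T /\ continuous_from (-tau) I /\
  continuous_from (-tau) V /\
  (forall t, 0 < t ->
     derivable_pt_lim T t
       (s - d * T t + a * T t * (1 - (T t + I t) / Tmax)
        - infect b alpha (T t) (V t))) /\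
  (forall t, 0 < t ->
     derivable_pt_lim I t
       (infect b alpha (T (t - tau)) (V (t - tau))
        + a * I t * (1 - (T t + I t) / Tmax) - mu * I t)) /\
  (forall t, 0 < t ->
     derivable_pt_lim V t (p * I t - c * V t)).

Definition T0 (s d a Tmax : R) : R :=
  Tmax / (2 * a) * (a - d + sqrt ((a - d) ^ 2 + 4 * a * s / Tmax)).

From Stdlib Require Import Reals Lra Classical.
Open Scope R_scope.

(* Solutions stay nonnegative: perturb each component by
   z(u) = e exp (K (u - t)); at the first time one of T + z, I + z, V + z
   vanishes, the equations bound that component's derivative below by -(K - 1) z,
   which is slower than z grows, a contradiction; then let e -> 0.
   Nonnegativity of I and V gives T' <= F(T) with the logistic supply
   F(x) = s - d x + a x (1 - x / Tmax), whose larger root is T0, so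
   T' <= -a eps^2 / Tmax as long as T >= T0 + eps.  Hence T falls below
   T0 + eps in finite time and can never cross back above it. *)

Lemma continuity_pt_near (f : R -> R) x eps : continuity_pt f x -> 0 < eps ->
  exists delta, 0 < delta /\ forall y, Rabs (y - x) < delta -> Rabs (f y - f x) < eps.
Proof.
  intros Hf Heps. destruct (Hf eps Heps) as [delta [Hdelta Hnear]].
  exists delta; split; [exact Hdelta|]. intros y Hy.
  destruct (Req_dec y x) as [->|Hyx].
  - rewrite Rminus_diag, Rabs_R0. exact Heps.
  - apply (Hnear y). split; [split; [exact I | congruence] | exact Hy].
Qed.

Lemma continuity_pt_Rmin (f g : R -> R) x : continuity_pt f x -> continuity_pt g x ->
  continuity_pt (fun u => Rmin (f u) (g u)) x.
Proof.
  intros Hf Hg eps Heps.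
  destruct (Hf eps Heps) as [d1 [Hd1 H1]]. destruct (Hg eps Heps) as [d2 [Hd2 H2]].
  exists (Rmin d1 d2); split; [apply Rmin_glb_lt; assumption|].
  intros y [Hy Hyx]. simpl in *. unfold R_dist in *.
  pose proof (Rmin_l d1 d2). pose proof (Rmin_r d1 d2).
  assert (Hy1 : Rabs (y - x) < d1) by lra. assert (Hy2 : Rabs (y - x) < d2) by lra.
  specialize (H1 y (conj Hy Hy1)). specialize (H2 y (conj Hy Hy2)).
  unfold Rmin in *; revert H1 H2; destruct (Rle_dec (f y) (g y)), (Rle_dec (f x) (g x));
  unfold Rabs; repeat destruct Rcase_abs; intros; lra.
Qed.

Lemma continuity_pt_Rmax_clamp (f : R -> R) a t : continuous_from a f ->
  continuity_pt (fun u => f (Rmax a u)) t.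
Proof.
  intros Hf eps Heps.
  destruct (Hf (Rmax a t) (Rmax_l a t) eps Heps) as [delta [Hdelta Hnear]].
  exists delta; split; [exact Hdelta|].
  intros y [_ Hy]. simpl in *. unfold R_dist in *. apply Hnear; [apply Rmax_l|].
  revert Hy; unfold Rmax, Rabs; destruct (Rle_dec a y), (Rle_dec a t);
  repeat destruct Rcase_abs; intros; lra.
Qed.

Lemma bounded_on_segment (f : R -> R) a b : a <= b ->
  (forall u, a <= u <= b -> continuity_pt f u) ->
  exists M, 0 <= M /\ forall u, a <= u <= b -> Rabs (f u) <= M.
Proof.
  intros Hab Hf.
  destruct (continuity_ab_maj f a b Hab Hf) as [umax [Hmax _]].
  destruct (continuity_ab_min f a b Hab Hf) as [umin [Hmin _]].
  exists (Rabs (f umax) + Rabs (f umin)). split.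
  - pose proof (Rabs_pos (f umax)); pose proof (Rabs_pos (f umin)); lra.
  - intros u Hu. specialize (Hmax u Hu); specialize (Hmin u Hu).
    revert Hmax Hmin; unfold Rabs; repeat destruct Rcase_abs; intros; lra.
Qed.

Lemma continuous_from_bounded (f : R -> R) a b : a <= b -> continuous_from a f ->
  exists M, 0 <= M /\ forall u, a <= u <= b -> Rabs (f u) <= M.
Proof.
  intros Hab Hf.
  destruct (bounded_on_segment (fun u => f (Rmax a u)) a b Hab
              (fun u _ => continuity_pt_Rmax_clamp f a u Hf)) as [M [HM Hbound]].
  exists M; split; [exact HM|]. intros u Hu.
  rewrite <- (Rmax_right a u) by lra. exact (Hbound u Hu).
Qed.

Lemma pos_on_segment_of_no_first_zero (x : R -> R) t0 t1 :
  (forall t, t0 <= t <= t1 -> continuity_pt x t) -> 0 < x t0 ->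
  (forall t, t0 < t <= t1 -> x t = 0 -> (forall u, t0 <= u <= t -> 0 <= x u) -> False) ->
  forall t, t0 <= t <= t1 -> 0 < x t.
Proof.
  intros Hx Hx0 Hzero t Ht.
  set (E := fun u => t0 <= u <= t /\ forall v, t0 <= v <= u -> 0 < x v).
  assert (Et0 : E t0).
  { split; [lra|]. intros v Hv. replace v with t0 by lra. exact Hx0. }
  destruct (completeness E) as [m [Hub Hlub]]; [exists t; intros u [Hu _]; lra | eauto |].
  assert (Hm : t0 <= m <= t) by (split; [apply Hub, Et0 | apply Hlub; intros u [Hu _]; lra]).
  assert (below : forall v, t0 <= v < m -> 0 < x v).
  { intros v Hv. destruct (Rlt_le_dec 0 (x v)) as [Hpos|Hneg]; [exact Hpos|].
    enough (m <= v) by lra. apply Hlub. intros u [Hu HEu].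
    destruct (Rle_dec u v) as [|Hvu]; [assumption|]. exfalso.
    specialize (HEu v ltac:(lra)). lra. }
  assert (Hxm : x m <> 0).
  { intros Hxm. destruct (Req_dec m t0) as [->|Hmt0]; [lra|].
    apply (Hzero m ltac:(lra) Hxm). intros u Hu.
    destruct (Req_dec u m) as [->|]; [lra|]. left; apply below; lra. }
  destruct (continuity_pt_near x m (Rabs (x m)) (Hx m ltac:(lra)) (Rabs_pos_lt _ Hxm))
    as [delta [Hdelta Hnear]].
  destruct (Rdichotomy _ _ Hxm) as [Hneg|Hpos].
  - exfalso. destruct (Req_dec m t0) as [->|Hmt0]; [lra|].
    set (v := Rmax t0 (m - delta / 2)).
    assert (Hv : t0 <= v < m) by (split; [apply Rmax_l | apply Rmax_lub_lt; lra]).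
    assert (m - delta / 2 <= v) by apply Rmax_r.
    assert (Hvm : Rabs (v - m) < delta) by (rewrite Rabs_left; lra).
    specialize (Hnear v Hvm). specialize (below v Hv).
    rewrite (Rabs_left (x m)) in Hnear by lra. apply Rabs_def2 in Hnear. lra.
  - destruct (Req_dec m t) as [<-|Hmt]; [exact Hpos|]. exfalso.
    set (m' := Rmin t (m + delta / 2)).
    assert (m < m' <= t) by (split; [apply Rmin_glb_lt; lra | apply Rmin_l]).
    assert (m' <= m + delta / 2) by apply Rmin_r.
    enough (Em' : E m') by (specialize (Hub m' Em'); lra).
    split; [lra|]. intros v Hv.
    destruct (Rlt_le_dec v m); [apply below; lra|].
    assert (Hvm : Rabs (v - m) < delta) by (apply Rabs_def1; lra).
    specialize (Hnear v Hvm).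
    rewrite (Rabs_right (x m)) in Hnear by lra. apply Rabs_def2 in Hnear. lra.
Qed.

Lemma deriv_nonpos_at_first_zero (y : R -> R) D t0 t : t0 < t -> derivable_pt_lim y t D ->
  y t = 0 -> (forall u, t0 <= u <= t -> 0 <= y u) -> D <= 0.
Proof.
  intros Ht Hd Hy Hpos. destruct (Rle_lt_dec D 0) as [|HD]; [assumption|]. exfalso.
  destruct (Hd D HD) as [delta Hdelta].
  set (h := - Rmin delta (t - t0) / 2).
  assert (0 < Rmin delta (t - t0)) by (apply Rmin_glb_lt; [apply cond_pos | lra]).
  pose proof (Rmin_l delta (t - t0)). pose proof (Rmin_r delta (t - t0)).
  assert (Hh : h < 0) by (unfold h; lra).
  specialize (Hdelta h ltac:(lra) ltac:(rewrite Rabs_left; unfold h; lra)).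
  apply Rabs_def2 in Hdelta. rewrite Hy in Hdelta.
  assert (0 <= y (t + h)) by (apply Hpos; unfold h; lra).
  assert (/ h < 0) by (apply Rinv_lt_0_compat, Hh).
  unfold Rdiv in Hdelta. nra.
Qed.

Lemma derivable_pt_lim_scaled_exp e K t0 u :
  derivable_pt_lim (fun v => e * exp (K * (v - t0))) u (K * (e * exp (K * (u - t0)))).
Proof.
  assert (Haff : derivable_pt_lim (fun v => K * (v - t0)) u K).
  { pose proof (derivable_pt_lim_minus id (fct_cte t0) u 1 0
      (derivable_pt_lim_id u) (derivable_pt_lim_const t0 u)) as Hshift.
    pose proof (derivable_pt_lim_scal _ K u _ Hshift) as Hscal.
    rewrite Rminus_0_r, Rmult_1_r in Hscal. exact Hscal. }
  pose proof (derivable_pt_lim_comp _ exp u K _ Haff (derivable_pt_lim_exp _)) as Hcomp.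
  replace (K * (e * exp (K * (u - t0)))) with (e * (exp (K * (u - t0)) * K)) by ring.
  exact (derivable_pt_lim_scal _ e u _ Hcomp).
Qed.

Lemma nonneg_of_gt_neg_small x h : 0 < h -> (forall e, 0 < e <= h -> - e < x) -> 0 <= x.
Proof.
  intros Hh Hx. destruct (Rle_lt_dec 0 x) as [|Hneg]; [assumption|]. exfalso.
  set (e := Rmin h (- x / 2)).
  assert (0 < e) by (apply Rmin_glb_lt; lra).
  pose proof (Rmin_l h (- x / 2)). pose proof (Rmin_r h (- x / 2)).
  specialize (Hx e ltac:(unfold e in *; lra)). unfold e in *. lra.
Qed.

Lemma rate_reaches_level (y y' : R -> R) L kappa t0 : 0 < kappa ->
  (forall t, t0 <= t -> derivable_pt_lim y t (y' t)) ->
  (forall t, t0 <= t -> L <= y t -> y' t <= - kappa) ->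
  exists tb, t0 <= tb /\ y tb <= L.
Proof.
  intros Hk Hd Hrate. apply NNPP; intros Hnone.
  assert (above : forall t, t0 <= t -> L < y t).
  { intros t Ht. apply Rnot_le_lt; intros Hle. apply Hnone; eauto. }
  set (len := (y t0 - L) / kappa + 1).
  assert (Hlen : kappa * len = y t0 - L + kappa) by (unfold len; field; lra).
  assert (0 <= (y t0 - L) / kappa)
    by (apply Rle_mult_inv_pos; [pose proof (above t0 (Rle_refl _)) |]; lra).
  destruct (MVT_cor2 y y' t0 (t0 + len)) as [c [Hmvt Hc]];
    [unfold len; lra | intros c Hc; apply Hd; lra |].
  pose proof (Hrate c ltac:(lra) (Rlt_le _ _ (above c ltac:(lra)))).
  pose proof (above (t0 + len) ltac:(unfold len; lra)).
  replace (t0 + len - t0) with len in Hmvt by ring.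
  assert (0 < len) by (unfold len; lra).
  nra.
Qed.

Lemma rate_stays_below (y y' : R -> R) L tb :
  (forall t, tb <= t -> derivable_pt_lim y t (y' t)) ->
  (forall t, tb <= t -> L < y t -> y' t < 0) ->
  y tb <= L -> forall t, tb <= t -> y t <= L.
Proof.
  intros Hd Hrate Htb t Ht. apply Rnot_lt_le; intros Hyt.
  set (level := (y t + L) / 2).
  enough (0 < level - y t) by (unfold level in *; lra).
  apply (pos_on_segment_of_no_first_zero (fun u => level - y u) tb t); [| | | lra].
  - intros u Hu. apply (continuity_pt_minus (fct_cte level) y).
    + apply continuity_pt_const. intros ? ?. reflexivity.
    + apply derivable_continuous_pt. exists (y' u). apply Hd; lra.
  - unfold level; lra.
  - intros t3 Ht3 Hzero Hnn.
    pose proof (derivable_pt_lim_minus (fct_cte level) y t3 0 (y' t3)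
      (derivable_pt_lim_const level t3) (Hd t3 ltac:(lra))) as Hdiff.
    pose proof (deriv_nonpos_at_first_zero _ _ tb t3 ltac:(lra) Hdiff Hzero Hnn).
    pose proof (Hrate t3 ltac:(lra) ltac:(unfold level in *; lra)).
    lra.
Qed.

Lemma eventually_le_of_rate (y y' : R -> R) L kappa : 0 < kappa ->
  (forall t, 0 < t -> derivable_pt_lim y t (y' t)) ->
  (forall t, 0 < t -> L <= y t -> y' t <= - kappa) ->
  exists t1, 0 < t1 /\ forall t, t1 < t -> y t <= L.
Proof.
  intros Hk Hd Hrate.
  destruct (rate_reaches_level y y' L kappa 1 Hk) as [tb [Htb Hytb]];
    [intros t Ht; apply Hd; lra | intros t Ht; apply Hrate; lra |].
  exists tb; split; [lra|]. intros t Ht.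
  apply (rate_stays_below y y' L tb); [intros u Hu; apply Hd; lra | | assumption | lra].
  intros u Hu HL. pose proof (Hrate u ltac:(lra) (Rlt_le _ _ HL)). lra.
Qed.

Lemma Rabs_le_inv x B : Rabs x <= B -> - B <= x <= B.
Proof. unfold Rabs; destruct Rcase_abs; lra. Qed.

Lemma Rmin3_le x y w :
  Rmin (Rmin x y) w <= x /\ Rmin (Rmin x y) w <= y /\ Rmin (Rmin x y) w <= w.
Proof. unfold Rmin; repeat destruct Rle_dec; lra. Qed.

Lemma Rmin3_eq_0 x y w : 0 <= x -> 0 <= y -> 0 <= w -> Rmin (Rmin x y) w = 0 ->
  x = 0 \/ y = 0 \/ w = 0.
Proof. unfold Rmin; repeat destruct Rle_dec; intros; lra. Qed.

Definition T_rate (s d a Tmax b alpha Tv Iv Vv : R) : R :=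
  s - d * Tv + a * Tv * (1 - (Tv + Iv) / Tmax) - infect b alpha Tv Vv.

Definition I_rate (a Tmax b alpha mu Td Vd Tv Iv : R) : R :=
  infect b alpha Td Vd + a * Iv * (1 - (Tv + Iv) / Tmax) - mu * Iv.

(* When one component equals [-z] and all values lie in [-z, B] with [z <= B],
   every right-hand side is at least [- touch_rate * z]. *)
Definition touch_rate (a Tmax b p B : R) : R := a * (1 + 2 * B / Tmax) + 2 * b * B + p.

Lemma logistic_ge_at_touch a Tmax z B X : 0 < a -> 0 < Tmax -> 0 <= z -> - (2 * B) <= X ->
  - (a * (1 + 2 * B / Tmax)) * z <= a * (- z) * (1 - X / Tmax).
Proof.
  intros Ha HT Hz HX.
  assert (0 <= (2 * B + X) / Tmax) by (apply Rle_mult_inv_pos; lra).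
  replace (a * (- z) * (1 - X / Tmax)) with
    (- (a * (1 + 2 * B / Tmax)) * z + a * z * ((2 * B + X) / Tmax)) by (field; lra).
  assert (0 <= a * z * ((2 * B + X) / Tmax)) by (apply Rmult_le_pos; nra).
  lra.
Qed.

Lemma infect_ge b alpha Tv Vv m : 0 < b -> 0 <= m -> 1 / 2 <= 1 + alpha * Vv ->
  - m <= Tv * Vv -> - (2 * b * m) <= infect b alpha Tv Vv.
Proof.
  intros Hb Hm Hden Hprod. unfold infect, Rdiv.
  set (q := / (1 + alpha * Vv)).
  assert (0 < q) by (apply Rinv_0_lt_compat; lra).
  assert (q <= 2).
  { unfold q. replace 2 with (/ (1 / 2)) by field. apply Rinv_le_contravar; lra. }
  replace (b * Tv * Vv * q) with (b * (Tv * Vv) * q) by ring.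
  assert (0 <= b * m) by (apply Rmult_le_pos; lra).
  destruct (Rle_lt_dec 0 (Tv * Vv)).
  - assert (0 <= b * (Tv * Vv) * q) by (apply Rmult_le_pos; [apply Rmult_le_pos|]; lra).
    lra.
  - assert (0 <= (2 - q) * (- (b * (Tv * Vv)))) by (apply Rmult_le_pos; nra).
    nra.
Qed.

Lemma infect_opp b alpha Tv Vv : infect b alpha (- Tv) Vv = - infect b alpha Tv Vv.
Proof. unfold infect, Rdiv. ring. Qed.

Lemma mul_ge_of_box z B x y : 0 <= z -> 0 <= B -> - z <= x <= B -> - z <= y <= B -> - (B * z) <= x * y.
Proof.
  intros Hz HB Hx Hy.
  destruct (Rle_lt_dec 0 x), (Rle_lt_dec 0 y); nra.
Qed.

Lemma T_rate_ge_at_touch s d a Tmax b alpha p z B Iv Vv :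
  0 < s -> 0 < d -> 0 < a -> 0 < Tmax -> 0 < b -> 0 < alpha -> 0 < p ->
  0 < z -> z <= B -> 2 * alpha * z <= 1 -> - z <= Iv -> - z <= Vv ->
  - (touch_rate a Tmax b p B) * z <= T_rate s d a Tmax b alpha (- z) Iv Vv.
Proof.
  intros Hs Hd Ha HT Hb Hal Hp Hz HzB Hzal HI HV. unfold T_rate, touch_rate.
  pose proof (logistic_ge_at_touch a Tmax z B (- z + Iv) Ha HT ltac:(lra) ltac:(lra)).
  assert (- (2 * b * (B * z)) <= infect b alpha z Vv)
    by (apply infect_ge; nra).
  rewrite infect_opp. nra.
Qed.

Lemma I_rate_ge_at_touch a Tmax b alpha mu p z B Td Vd Tv :
  0 < a -> 0 < Tmax -> 0 < b -> 0 < alpha -> 0 < mu -> 0 < p ->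
  0 < z -> z <= B -> 2 * alpha * z <= 1 ->
  - z <= Td <= B -> - z <= Vd <= B -> - z <= Tv ->
  - (touch_rate a Tmax b p B) * z <= I_rate a Tmax b alpha mu Td Vd Tv (- z).
Proof.
  intros Ha HT Hb Hal Hmu Hp Hz HzB Hzal HTd HVd HTv. unfold I_rate, touch_rate.
  pose proof (logistic_ge_at_touch a Tmax z B (Tv + - z) Ha HT ltac:(lra) ltac:(lra)).
  assert (- (2 * b * (B * z)) <= infect b alpha Td Vd).
  { apply infect_ge; [lra | nra | nra | apply mul_ge_of_box; lra]. }
  nra.
Qed.

Lemma V_rate_ge_at_touch a Tmax b p c z B Iv :
  0 < a -> 0 < Tmax -> 0 < b -> 0 < p -> 0 < c -> 0 < z -> 0 <= B -> - z <= Iv ->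
  - (touch_rate a Tmax b p B) * z <= p * Iv - c * (- z).
Proof.
  intros Ha HT Hb Hp Hc Hz HB HI. unfold touch_rate.
  assert (0 <= B / Tmax) by (apply Rle_mult_inv_pos; lra).
  assert (0 <= a * (1 + 2 * B / Tmax) * z) by (apply Rmult_le_pos; nra).
  assert (0 <= b * B * z) by (apply Rmult_le_pos; nra).
  assert (0 <= p * (Iv + z)) by nra.
  nra.
Qed.

Section Positivity.

Variables (s d a Tmax b alpha mu p c tau : R) (T I V : R -> R).
Hypotheses (Hs : 0 < s) (Hd : 0 < d) (Ha : 0 < a) (HTmax : 0 < Tmax) (Hb : 0 < b)
  (Halpha : 0 < alpha) (Hmu : 0 < mu) (Hp : 0 < p) (Hc : 0 < c) (Htau : 0 <= tau).
Hypothesis init_nonneg : forall t, - tau <= t <= 0 -> 0 <= T t /\ 0 <= I t /\ 0 <= V t.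
Hypotheses (T_cont : continuous_from (- tau) T) (I_cont : continuous_from (- tau) I)
  (V_cont : continuous_from (- tau) V).
Hypothesis T_deriv : forall t, 0 < t ->
  derivable_pt_lim T t (T_rate s d a Tmax b alpha (T t) (I t) (V t)).
Hypothesis I_deriv : forall t, 0 < t ->
  derivable_pt_lim I t (I_rate a Tmax b alpha mu (T (t - tau)) (V (t - tau)) (T t) (I t)).
Hypothesis V_deriv : forall t, 0 < t -> derivable_pt_lim V t (p * I t - c * V t).

Lemma first_touch_impossible B (z : R -> R) t2 : 0 <= B -> 0 < t2 ->
  (forall u, - tau <= u <= t2 -> Rabs (T u) <= B /\ Rabs (I u) <= B /\ Rabs (V u) <= B) ->
  (forall u, 0 < z u) -> (forall u v, u <= v -> z u <= z v) ->
  derivable_pt_lim z t2 ((touch_rate a Tmax b p B + 1) * z t2) -> 2 * alpha * z t2 <= 1 ->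
  (forall u, 0 <= u <= t2 -> 0 <= T u + z u /\ 0 <= I u + z u /\ 0 <= V u + z u) ->
  T t2 + z t2 = 0 \/ I t2 + z t2 = 0 \/ V t2 + z t2 = 0 -> False.
Proof.
  intros HB Ht2 Hbound z_pos z_mono z_deriv z_small sum_nonneg Htouch.
  assert (lower : forall u, - tau <= u <= t2 ->
    - z t2 <= T u /\ - z t2 <= I u /\ - z t2 <= V u).
  { intros u Hu. pose proof (z_pos t2). destruct (Rle_lt_dec u 0).
    - destruct (init_nonneg u ltac:(lra)) as [? [? ?]]. lra.
    - destruct (sum_nonneg u ltac:(lra)) as [? [? ?]]. pose proof (z_mono u t2 ltac:(lra)). lra. }
  assert (touch : forall (X : R -> R) D, derivable_pt_lim X t2 D -> X t2 + z t2 = 0 ->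
    (forall u, 0 <= u <= t2 -> 0 <= X u + z u) ->
    D <= - (touch_rate a Tmax b p B + 1) * z t2).
  { intros X D HX HX0 HXnn.
    pose proof (derivable_pt_lim_plus X z t2 D _ HX z_deriv) as HXz.
    pose proof (deriv_nonpos_at_first_zero _ _ 0 t2 Ht2 HXz HX0 HXnn). lra. }
  destruct (Hbound t2 ltac:(lra)) as [BT [BI BV]].
  apply Rabs_le_inv in BT, BI, BV.
  pose proof (z_pos t2).
  destruct Htouch as [HTz | [HIz | HVz]].
  - pose proof (touch T _ (T_deriv t2 Ht2) HTz (fun u Hu => proj1 (sum_nonneg u Hu))).
    destruct (lower t2 ltac:(lra)) as [_ [? ?]].
    replace (T t2) with (- z t2) in * by lra.
    pose proof (T_rate_ge_at_touch s d a Tmax b alpha p (z t2) B (I t2) (V t2)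
      Hs Hd Ha HTmax Hb Halpha Hp ltac:(lra) ltac:(lra) z_small ltac:(lra) ltac:(lra)).
    lra.
  - pose proof (touch I _ (I_deriv t2 Ht2) HIz (fun u Hu => proj1 (proj2 (sum_nonneg u Hu)))).
    destruct (lower t2 ltac:(lra)) as [? _].
    destruct (lower (t2 - tau) ltac:(lra)) as [? [_ ?]].
    destruct (Hbound (t2 - tau) ltac:(lra)) as [BTd [_ BVd]].
    apply Rabs_le_inv in BTd, BVd.
    replace (I t2) with (- z t2) in * by lra.
    pose proof (I_rate_ge_at_touch a Tmax b alpha mu p (z t2) B (T (t2 - tau)) (V (t2 - tau))
      (T t2) Ha HTmax Hb Halpha Hmu Hp ltac:(lra) ltac:(lra) z_small
      ltac:(lra) ltac:(lra) ltac:(lra)).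
    lra.
  - pose proof (touch V _ (V_deriv t2 Ht2) HVz (fun u Hu => proj2 (proj2 (sum_nonneg u Hu)))).
    destruct (lower t2 ltac:(lra)) as [_ [? _]].
    replace (V t2) with (- z t2) in * by lra.
    pose proof (V_rate_ge_at_touch a Tmax b p c (z t2) B (I t2)
      Ha HTmax Hb Hp Hc ltac:(lra) HB ltac:(lra)).
    lra.
Qed.

(* The perturbation [e exp (K (u - t))] grows at rate [K = touch_rate + 1], faster
   than any component can decrease once it touches it; [Rmax] extends the
   solution continuously to the left of [-tau]. *)
Lemma solution_gt_neg_small t B e : 0 < t -> 0 <= B ->
  (forall u, - tau <= u <= t -> Rabs (T u) <= B /\ Rabs (I u) <= B /\ Rabs (V u) <= B) ->
  0 < e -> 2 * alpha * e <= 1 -> - e < T t /\ - e < I t /\ - e < V t.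
Proof.
  intros Ht HB Hbound He Heal.
  set (K := touch_rate a Tmax b p B + 1).
  assert (HK : 0 < K).
  { unfold K, touch_rate. assert (0 <= B / Tmax) by (apply Rle_mult_inv_pos; lra). nra. }
  set (z := fun u => e * exp (K * (u - t))).
  assert (z_pos : forall u, 0 < z u) by (intro u; apply Rmult_lt_0_compat; [lra | apply exp_pos]).
  assert (z_mono : forall u v, u <= v -> z u <= z v).
  { intros u v Huv. apply Rmult_le_compat_l; [lra|].
    destruct Huv as [Huv | ->]; [left; apply exp_increasing; nra | lra]. }
  assert (z_t : z t = e) by (unfold z; rewrite Rminus_diag, Rmult_0_r, exp_0; ring).
  set (m := fun u => Rmin (Rmin (T (Rmax (- tau) u) + z u) (I (Rmax (- tau) u) + z u))
                          (V (Rmax (- tau) u) + z u)).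
  assert (m_on : forall u, 0 <= u -> m u = Rmin (Rmin (T u + z u) (I u + z u)) (V u + z u))
    by (intros u Hu; unfold m; rewrite Rmax_right by lra; reflexivity).
  enough (Hmt : 0 < m t).
  { rewrite m_on, z_t in Hmt by lra. pose proof (Rmin3_le (T t + e) (I t + e) (V t + e)). lra. }
  apply (pos_on_segment_of_no_first_zero m 0 t); [| | | lra].
  - intros u _.
    assert (z_cont : continuity_pt z u).
    { apply derivable_continuous_pt. eexists. apply derivable_pt_lim_scaled_exp. }
    unfold m. apply continuity_pt_Rmin; [apply continuity_pt_Rmin|];
      apply (continuity_pt_plus _ z); auto; apply continuity_pt_Rmax_clamp; assumption.
  - rewrite m_on by lra. destruct (init_nonneg 0 ltac:(lra)) as [HT0 [HI0 HV0]].
    pose proof (z_pos 0). repeat apply Rmin_glb_lt; lra.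
  - intros t2 Ht2 Hm0 Hmnn.
    assert (sum_nonneg : forall u, 0 <= u <= t2 ->
      0 <= T u + z u /\ 0 <= I u + z u /\ 0 <= V u + z u).
    { intros u Hu. specialize (Hmnn u Hu). rewrite m_on in Hmnn by lra.
      pose proof (Rmin3_le (T u + z u) (I u + z u) (V u + z u)). lra. }
    rewrite m_on in Hm0 by lra.
    destruct (sum_nonneg t2 ltac:(lra)) as [HT2 [HI2 HV2]].
    apply (first_touch_impossible B z t2 HB ltac:(lra)); auto.
    + intros u Hu. apply Hbound. lra.
    + apply derivable_pt_lim_scaled_exp.
    + pose proof (z_mono t2 t ltac:(lra)). nra.
    + apply Rmin3_eq_0; assumption.
Qed.

Lemma solution_nonneg t : - tau <= t -> 0 <= T t /\ 0 <= I t /\ 0 <= V t.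
Proof.
  intros Ht. destruct (Rle_lt_dec t 0) as [Ht0 | Ht0]; [apply init_nonneg; lra|].
  destruct (continuous_from_bounded T (- tau) t ltac:(lra) T_cont) as [BT [HBT HT]].
  destruct (continuous_from_bounded I (- tau) t ltac:(lra) I_cont) as [BI [HBI HI]].
  destruct (continuous_from_bounded V (- tau) t ltac:(lra) V_cont) as [BV [HBV HV]].
  set (B := BT + BI + BV).
  assert (Hbound : forall u, - tau <= u <= t ->
    Rabs (T u) <= B /\ Rabs (I u) <= B /\ Rabs (V u) <= B).
  { intros u Hu. specialize (HT u Hu); specialize (HI u Hu); specialize (HV u Hu).
    unfold B; lra. }
  assert (small : forall e, 0 < e <= / (2 * alpha) -> - e < T t /\ - e < I t /\ - e < V t).
  { intros e He. apply (solution_gt_neg_small t B e Ht0); [unfold B; lra | exact Hbound | lra |].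
    replace 1 with (2 * alpha * / (2 * alpha)) by (field; lra).
    apply Rmult_le_compat_l; lra. }
  assert (Hh : 0 < / (2 * alpha)) by (apply Rinv_0_lt_compat; lra).
  split; [|split]; apply (nonneg_of_gt_neg_small _ (/ (2 * alpha)) Hh);
    intros e He; apply small, He.
Qed.

End Positivity.

Lemma T_rate_le_logistic s d a Tmax b alpha Tv Iv Vv :
  0 < a -> 0 < Tmax -> 0 < b -> 0 < alpha -> 0 <= Tv -> 0 <= Iv -> 0 <= Vv ->
  T_rate s d a Tmax b alpha Tv Iv Vv <= s - d * Tv + a * Tv * (1 - Tv / Tmax).
Proof.
  intros Ha HT Hb Hal HTv HIv HVv. unfold T_rate, infect.
  assert (0 <= b * Tv * Vv / (1 + alpha * Vv))
    by (apply Rle_mult_inv_pos; [repeat apply Rmult_le_pos |]; nra).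
  assert (0 <= a * Tv * Iv / Tmax) by (apply Rle_mult_inv_pos; [repeat apply Rmult_le_pos |]; lra).
  replace (a * Tv * (1 - (Tv + Iv) / Tmax))
    with (a * Tv * (1 - Tv / Tmax) - a * Tv * Iv / Tmax) by (field; lra).
  lra.
Qed.

Lemma logistic_le_above_T0 s d a Tmax eps x : 0 < s -> 0 < a -> 0 < Tmax -> 0 < eps ->
  T0 s d a Tmax + eps <= x ->
  s - d * x + a * x * (1 - x / Tmax) <= - (a * eps ^ 2 / Tmax).
Proof.
  intros Hs Ha HT He Hx. unfold T0 in Hx.
  set (D := (a - d) ^ 2 + 4 * a * s / Tmax) in *.
  assert (HD : 0 <= D).
  { unfold D. assert (0 <= 4 * a * s / Tmax) by (apply Rle_mult_inv_pos; nra).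
    pose proof (pow2_ge_0 (a - d)). lra. }
  set (S := sqrt D) in *.
  assert (HS : S * S = D) by (apply sqrt_sqrt, HD).
  assert (0 <= S) by apply sqrt_pos.
  set (root := Tmax / (2 * a) * (a - d + S)) in *.
  set (root' := Tmax / (2 * a) * (a - d - S)).
  assert (Hfactor : s - d * x + a * x * (1 - x / Tmax) = - (a / Tmax) * ((x - root) * (x - root')))
    by (replace s with (Tmax / (4 * a) * (D - (a - d) ^ 2)) by (unfold D; field; lra);
        rewrite <- HS; unfold root, root'; field; lra).
  assert (root' <= root) by (unfold root, root'; apply Rmult_le_compat_l;
                              [apply Rle_mult_inv_pos |]; lra).
  assert (eps * eps <= (x - root) * (x - root')) by (apply Rmult_le_compat; lra).
  assert (0 < a / Tmax) by (apply Rdiv_lt_0_compat; lra).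
  rewrite Hfactor. replace (- (a * eps ^ 2 / Tmax)) with (- (a / Tmax) * (eps * eps)) by (field; lra).
  nra.
Qed.

Theorem lemma3 (s d a Tmax b alpha mu p c tau : R) (T I V : R -> R) :
  0 < s -> 0 < d -> 0 < a -> 0 < Tmax -> 0 < b -> 0 < alpha ->
  0 < mu -> 0 < p -> 0 < c -> 0 <= tau ->
  is_solution s d a Tmax b alpha mu p c tau T I V ->
  forall eps, 0 < eps ->
    exists t1, 0 < t1 /\ forall t, t1 < t -> T t <= T0 s d a Tmax + eps.
Proof.
  intros Hs Hd Ha HTmax Hb Halpha Hmu Hp Hc Htau Hsol eps Heps.
  destruct Hsol as [init [T_cont [I_cont [V_cont [T_deriv [I_deriv V_deriv]]]]]].
  pose proof (solution_nonneg s d a Tmax b alpha mu p c tau T I V Hs Hd Ha HTmax Hb Halpha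
    Hmu Hp Hc Htau init T_cont I_cont V_cont T_deriv I_deriv V_deriv) as nonneg.
  apply (eventually_le_of_rate T (fun t => T_rate s d a Tmax b alpha (T t) (I t) (V t))
    _ (a * eps ^ 2 / Tmax)).
  - apply Rdiv_lt_0_compat; [apply Rmult_lt_0_compat; [| apply pow_lt] |]; lra.
  - exact T_deriv.
  - intros t Ht HL. destruct (nonneg t ltac:(lra)) as [HT [HI HV]].
    eapply Rle_trans; [apply T_rate_le_logistic; assumption |].
    apply logistic_le_above_T0; assumption.
Qed.
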